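(* Let $f:\mathbb{P}^N\to\mathbb{P}^N$ be a linear map (an automorphism of $\mathbb{P}^N$ given by an invertible $(N+1)\times(N+1)$ matrix) defined over $\bar{\mathbb{Q}}$, and assume that there is at least one point of $\mathbb{P}^N$ whose $f$-orbit is Zariski dense. Then the set $(\mathbb{P}^N)_f^{\mathrm{dense}}$ contains a non-empty Zariski open subset of $\mathbb{P}^N$.
   Context: For a point $P$, $\mathcal{O}_f(P)=\{f^n(P):n\ge 0\}$ is its forward $f$-orbit, and $(\mathbb{P}^N)_f^{\mathrm{dense}}$ denotes the set of points $P\in\mathbb{P}^N$ whose orbit $\mathcal{O}_f(P)$ is Zariski dense in $\mathbb{P}^N$. *)

(* algC (the algebraic numbers = Qbar), multinomials mpoly. *)
From HB Require Import structures.
From mathcomp Require Import all_boot all_order all_algebra all_field.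
From mathcomp Require Import mpoly.
Set Implicit Arguments. Unset Strict Implicit. Unset Printing Implicit Defensive.
Import GRing.Theory.
Local Open Scope ring_scope.

(* Homogeneous coordinates: a point of P^N(Qbar) is represented by a nonzero
   column vector x : 'cV[algC]_(N.+1); two vectors represent the same point iff
   they are proportional.  All predicates below are invariant under scaling. *)

Definition evalv (N : nat) (p : {mpoly algC[N.+1]}) (x : 'cV[algC]_(N.+1)) : algC :=
  p.@[fun i => x i 0].

Definition homogeneous (N : nat) (p : {mpoly algC[N.+1]}) : Prop :=
  exists d : nat, p \is ishomog1 d mdeg.

Definition homog_family (N : nat) (S : {mpoly algC[N.+1]} -> Prop) : Prop :=
  forall p, S p -> homogeneous p.

Definition zero_locus (N : nat) (S : {mpoly algC[N.+1]} -> Prop)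
  (x : 'cV[algC]_(N.+1)) : Prop :=
  x != 0 /\ forall p, S p -> evalv p x = 0.

Definition zariski_closed (N : nat) (Z : 'cV[algC]_(N.+1) -> Prop) : Prop :=
  exists S, homog_family S /\ forall x, Z x <-> zero_locus S x.

Definition zariski_open (N : nat) (U : 'cV[algC]_(N.+1) -> Prop) : Prop :=
  zariski_closed (fun x => x != 0 /\ ~ U x) /\ forall x, U x -> x != 0.

Definition zariski_dense (N : nat) (A : 'cV[algC]_(N.+1) -> Prop) : Prop :=
  forall Z, zariski_closed Z -> (forall x, A x -> Z x) -> forall x, x != 0 -> Z x.

Definition orbit (N : nat) (M : 'M[algC]_(N.+1)) (x : 'cV[algC]_(N.+1))
  : 'cV[algC]_(N.+1) -> Prop :=
  fun y => exists n : nat, y = (M ^+ n) *m x.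

Definition dense_orbit_points (N : nat) (M : 'M[algC]_(N.+1))
  : 'cV[algC]_(N.+1) -> Prop :=
  fun x => x != 0 /\ zariski_dense (orbit M x).

From HB Require Import structures.
From mathcomp Require Import all_boot all_order all_algebra all_field.
From mathcomp Require Import mpoly.
Set Implicit Arguments. Unset Strict Implicit. Unset Printing Implicit Defensive.
Import GRing.Theory.
Local Open Scope ring_scope.

(* If the orbit of x is dense, its Krylov matrix [x, Mx, ..., M^N x] is
   invertible: otherwise a nonzero linear form kills the first N+1 iterates,
   hence, by Cayley-Hamilton, the whole orbit.  Invertibility of the Krylov
   matrix is the non-vanishing of a homogeneous polynomial in x, so it defines
   a Zariski open set U containing x.  For y in U the invertible linear map
   g = K(y) K(x)^-1 sends M^k x to M^k y for every k, and an invertible linear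
   map of P^N preserves Zariski density, so the orbit of y is dense too. *)

Section Krylov.
Variables (F : fieldType) (n : nat) (M : 'M[F]_n.+1).

Definition krylov (x : 'cV[F]_n.+1) : 'M[F]_n.+1 := \matrix_(i, j) (M ^+ j *m x) i 0.

Lemma exprmx_lin_comb k : exists a : 'I_n.+1 -> F, M ^+ k = \sum_i a i *: M ^+ i.
Proof.
pose r := 'X^k %% char_poly M.
have size_r : (size r <= n.+1)%N.
  by rewrite -ltnS -(size_char_poly M) ltn_modp monic_neq0 ?char_poly_monic.
exists (fun i => r`_i).
have -> : M ^+ k = horner_mx M r.
  rewrite -[M in LHS]horner_mx_X -rmorphXn (divp_eq 'X^k (char_poly M)) -/r.
  by rewrite rmorphD rmorphM /= Cayley_Hamilton mulr0 add0r.
rewrite -{1}(take_poly_id size_r) /take_poly poly_def rmorph_sum /=.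
by apply: eq_bigr => i _; rewrite linearZ /= rmorphXn /= horner_mx_X.
Qed.

Lemma exprmx_mul_krylov k : exists c : 'cV[F]_n.+1, forall x, M ^+ k *m x = krylov x *m c.
Proof.
have [a ->] := exprmx_lin_comb k; exists (\col_i a i) => x.
apply/colP => i; rewrite mulmx_suml summxE !mxE; apply: eq_bigr => j _.
by rewrite -scalemxAl !mxE mulrC.
Qed.

Lemma krylov_left_kernel m (w : 'M[F]_(m, n.+1)) x k :
  w *m krylov x = 0 -> w *m (M ^+ k *m x) = 0.
Proof. by move=> wK; have [c ->] := exprmx_mul_krylov k; rewrite mulmxA wK mul0mx. Qed.

Lemma krylov_transport x y k : krylov x \in unitmx ->
  (krylov y *m invmx (krylov x)) *m (M ^+ k *m x) = M ^+ k *m y.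
Proof. by move=> Kx; have [c Mk] := exprmx_mul_krylov k; rewrite !Mk mulmxA mulmxKV. Qed.

End Krylov.

Lemma dhomog_prod_ord (R : nzRingType) n l (F : 'I_l -> {mpoly R[n]}) (D : 'I_l -> nat) :
  (forall i, F i \is (D i).-homog) -> \prod_i F i \is (\sum_i D i)%N.-homog.
Proof.
move=> hF; apply: (big_rec2 (fun p d => p \is d.-homog)); first exact: dhomog1.
by move=> i p d _ hp; apply: dhomogM.
Qed.

Lemma unitmx_mul_eq0 (F : fieldType) n m (g : 'M[F]_n) (x : 'M[F]_(n, m)) :
  g \in unitmx -> (g *m x == 0) = (x == 0).
Proof.
move=> ug; apply/eqP/eqP => [gx0 | ->]; last exact: mulmx0.
by rewrite -(mulKmx ug x) gx0 mulmx0.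
Qed.

Lemma delta_mx_neq0 (R : nzRingType) m n (i : 'I_m) (j : 'I_n) :
  delta_mx i j != 0 :> 'M[R]_(m, n).
Proof. by apply/eqP => /matrixP/(_ i j)/eqP; rewrite !mxE !eqxx oner_eq0. Qed.

Section Zariski.
Variable n : nat.
Local Notation MP := {mpoly algC[n.+1]}.
Implicit Types (w : 'rV[algC]_n.+1) (x : 'cV[algC]_n.+1) (g : 'M[algC]_n.+1) (p : MP).

Definition linear_mpoly w : MP := \sum_k w 0 k *: 'X_k.

Lemma linear_mpoly_homog w : linear_mpoly w \is 1.-homog.
Proof.
apply: rpred_sum => k _; apply: rpredZ; rewrite dhomogX; apply/eqP; exact: mdeg1.
Qed.

Lemma evalv_linear_mpoly w x : evalv (linear_mpoly w) x = (w *m x) 0 0.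
Proof.
rewrite /evalv /linear_mpoly raddf_sum mxE; apply: eq_bigr => k _.
by rewrite /= mevalZ mevalXU.
Qed.

Definition lin_subst g : (n.+1).-tuple MP := [tuple linear_mpoly (row i g) | i < n.+1].

Lemma evalv_comp_lin_subst g p x : evalv (p \mPo lin_subst g) x = evalv p (g *m x).
Proof.
rewrite /evalv comp_mpoly_meval; apply: meval_eq => i.
by rewrite tnth_mktuple -/(evalv _ x) evalv_linear_mpoly -row_mul mxE.
Qed.

Lemma dhomog_comp_lin_subst d g p : p \is d.-homog -> p \mPo lin_subst g \is d.-homog.
Proof.
move=> hp; rewrite comp_mpolyE big_seq; apply: rpred_sum => m ms; apply: rpredZ.
rewrite -(dhomog_mf hp ms) /= mdegE; apply: dhomog_prod_ord => i.
by rewrite tnth_mktuple -[X in X.-homog]mul1n; apply: dhomogMn; exact: linear_mpoly_homog.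
Qed.

Lemma zariski_closed_preimage g Z : g \in unitmx ->
  zariski_closed Z -> zariski_closed (fun x => Z (g *m x)).
Proof.
move=> ug [S [hS SZ]].
exists (fun q => exists2 p, S p & q = p \mPo lin_subst g); split.
  move=> _ [p /hS [d hp] ->]; exists d; exact: dhomog_comp_lin_subst.
move=> x; rewrite SZ /zero_locus unitmx_mul_eq0 //.
split=> -[xn0 hx]; split=> // q.
  by case=> p Sp ->; rewrite evalv_comp_lin_subst hx.
by move=> Sq; rewrite -evalv_comp_lin_subst; apply: hx; exists q.
Qed.

Lemma zariski_dense_linear_image g (A B : 'cV[algC]_n.+1 -> Prop) : g \in unitmx ->
  zariski_dense A -> (forall x, A x -> B (g *m x)) -> zariski_dense B.
Proof.
move=> ug dA AB Z cZ BZ z z0.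
have gZ := dA _ (zariski_closed_preimage ug cZ) (fun x Ax => BZ _ (AB x Ax)).
rewrite -(mulKVmx ug z); apply: gZ.
by rewrite unitmx_mul_eq0 ?unitmx_inv.
Qed.

Lemma zariski_closed_zero_set p : homogeneous p ->
  zariski_closed (fun x => x != 0 /\ evalv p x = 0).
Proof.
move=> hp; exists (fun q => q = p); split; first by move=> _ ->.
by move=> x; split=> -[x0 px]; split=> //; [move=> _ -> | apply: px].
Qed.

Lemma zariski_open_nonvanishing p : homogeneous p ->
  zariski_open (fun x => x != 0 /\ evalv p x != 0).
Proof.
move=> hp; split; last by move=> x [].
case: (zariski_closed_zero_set hp) => S [hS SZ]; exists S; split=> // x.
rewrite -SZ; split=> [[x0 npx] | [x0 ->]]; split=> //; last by rewrite eqxx => -[].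
by apply/eqP/negPn/negP => px; apply: npx.
Qed.

Lemma zariski_dense_annihilator w (A : 'cV[algC]_n.+1 -> Prop) :
  zariski_dense A -> (forall x, A x -> x != 0) -> (forall x, A x -> w *m x = 0) -> w = 0.
Proof.
move=> dA A0 Aw.
have hH : forall x, x != 0 -> x != 0 /\ evalv (linear_mpoly w) x = 0.
  apply: dA; first by apply: zariski_closed_zero_set; exists 1%N; exact: linear_mpoly_homog.
  by move=> x Ax; split; [exact: A0 | rewrite evalv_linear_mpoly Aw // mxE].
apply/rowP => k; have [_] := hH _ (delta_mx_neq0 _ k 0).
by rewrite evalv_linear_mpoly -colE !mxE.
Qed.
End Zariski.

Section KrylovDeterminant.
Variables (n : nat) (M : 'M[algC]_n.+1).

Definition krylov_mpoly : 'M[{mpoly algC[n.+1]}]_n.+1 :=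
  \matrix_(i, j) linear_mpoly (row i (M ^+ j)).

Lemma evalv_det_krylov_mpoly x : evalv (\det krylov_mpoly) x = \det (krylov M x).
Proof.
rewrite /evalv -det_map_mx; congr (\det _); apply/matrixP => i j.
rewrite !mxE; transitivity (evalv (linear_mpoly (row i (M ^+ j))) x) => //.
by rewrite evalv_linear_mpoly mxE; apply: eq_bigr => k _; rewrite mxE.
Qed.

Lemma det_krylov_mpoly_homog : \det krylov_mpoly \is (n.+1).-homog.
Proof.
apply: rpred_sum => s _; rewrite rpredMsign.
have := @dhomog_prod_ord _ _ n.+1 _ (fun _ => 1%N).
rewrite sum_nat_const card_ord muln1; apply=> i.
by rewrite mxE; apply: linear_mpoly_homog.
Qed.

Lemma exprmx_mul_neq0 k (x : 'cV[algC]_n.+1) : M \in unitmx -> x != 0 -> M ^+ k *m x != 0.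
Proof. by move=> uM x0; rewrite unitmx_mul_eq0 // unitrX. Qed.

Lemma krylov_unitmx_dense_orbit x : M \in unitmx ->
  dense_orbit_points M x -> krylov M x \in unitmx.
Proof.
move=> uM [x0 dx]; rewrite unitmxE unitfE; apply/negP => /det0P [w w0 wK].
suff w_eq0 : w = 0 by rewrite w_eq0 eqxx in w0.
apply: (zariski_dense_annihilator dx) => _ [k ->].
  exact: exprmx_mul_neq0.
exact: krylov_left_kernel.
Qed.

Lemma dense_orbit_points_krylov x y : dense_orbit_points M x -> y != 0 ->
  krylov M x \in unitmx -> krylov M y \in unitmx -> dense_orbit_points M y.
Proof.
move=> [_ dx] y0 Kx Ky; split=> //.
have ug : krylov M y *m invmx (krylov M x) \in unitmx.
  by rewrite unitmx_mul Ky unitmx_inv.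
apply: (zariski_dense_linear_image ug dx) => _ [k ->].
by exists k; rewrite krylov_transport.
Qed.

End KrylovDeterminant.

Theorem lemma4p2 (N : nat) (M : 'M[algC]_(N.+1)) :
  M \in unitmx ->
  (exists x, dense_orbit_points M x) ->
  exists U : 'cV[algC]_(N.+1) -> Prop,
    zariski_open U /\ (exists x, U x) /\
    (forall x, U x -> dense_orbit_points M x).
Proof.
move=> uM [x dx]; have Kx := krylov_unitmx_dense_orbit uM dx.
have evalv_neq0 y : (evalv (\det (krylov_mpoly M)) y != 0) = (krylov M y \in unitmx).
  by rewrite evalv_det_krylov_mpoly unitmxE unitfE.
exists (fun y => y != 0 /\ evalv (\det (krylov_mpoly M)) y != 0); split; [|split].
- by apply: zariski_open_nonvanishing; exists N.+1; apply: det_krylov_mpoly_homog.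
- by exists x; split; [case: dx | rewrite evalv_neq0].
- by move=> y [y0]; rewrite evalv_neq0; apply: dense_orbit_points_krylov dx y0 Kx.
Qed.
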